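(* With the notation of the context, let $N\ge2$ and $Q^o(\alpha_i)=\theta/(N+i-1)$, $1\le i\le N$, where $\theta>0$ is chosen so that $\sum_iQ^o(\alpha_i)=1$. Then $Q^o(\alpha_i)<Q^*(\alpha_i)+\frac{\lg e}{2N^2}$ for all $i$, and $L(Q^o)<H(p)+D(p\|q)+\frac{\lg e}{2N}$.
   Context: Let $\mathcal S$ be a finite alphabet with $|\mathcal S|\ge2$, $p$ a probability distribution on $\mathcal S$ with $p(s)>0$, $N_s$ ($s\in\mathcal S$) positive integers, $N=\sum_sN_s$, $q(s)=N_s/N$, $\lg=\log_2$, and $\kappa_s=\lceil\lg(N/N_s)\rceil$ (so $\kappa_s\ge1$ and $N\le 2^{\kappa_s}N_s<2N$). Let $\alpha_1,\dots,\alpha_N$ be the states. For a probability distribution $Q$ on $\{\alpha_1,\dots,\alpha_N\}$ define $L(Q)=\sum_s p(s)\sum_{i=1}^N Q(\alpha_i)\ell_s(i)$, where $\ell_s(i)=\kappa_s-1$ if $i\le 2^{\kappa_s}N_s-N$ and $\ell_s(i)=\kappa_s$ otherwise. (This is the average code length of the Yokoo–Dubé-type sAEDS, whose state $\alpha_i$ encodes $s$ with $\ell_s(i)$ bits, when $Q$ is its stationary distribution with states indexed in non-increasing order of $Q$.) $Q^*(\alpha_i)=\lg\frac{N+i}{N+i-1}$, which sums to 1. $H(p)=-\sum p\lg p$, $D(p\|q)=\sum p\lg(p/q)$. *)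

From HB Require Import structures.
From mathcomp Require Import all_boot all_order all_algebra.
From mathcomp Require Import all_classical all_reals all_analysis.
Set Implicit Arguments. Unset Strict Implicit. Unset Printing Implicit Defensive.
Import Order.TTheory GRing.Theory Num.Theory.
Local Open Scope ring_scope.

Section Defs.
Variables (R : realType) (S : finType).

Definition lg (x : R) : R := ln x / ln 2.

Definition Ntot (Ns : S -> nat) : nat := (\sum_(s : S) Ns s)%N.

Definition qdist (Ns : S -> nat) (s : S) : R := (Ns s)%:R / (Ntot Ns)%:R.

(* kappa_s = ceil(lg(N / N_s)) (nonnegative, so taken as a nat) *)
Definition kappa (Ns : S -> nat) (s : S) : nat :=
  `| Num.ceil (lg ((Ntot Ns)%:R / (Ns s)%:R)) |%N.

Definition ell (Ns : S -> nat) (s : S) (i : nat) : nat :=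
  if (i <= 2 ^ kappa Ns s * Ns s - Ntot Ns)%N then (kappa Ns s).-1 else kappa Ns s.

Definition avg_len (p : S -> R) (Ns : S -> nat) (Q : nat -> R) : R :=
  \sum_(s : S) p s * \sum_(1 <= i < (Ntot Ns).+1) Q i * (ell Ns s i)%:R.

Definition Qstar (N : nat) (i : nat) : R := lg ((N + i)%:R / (N + i - 1)%:R).

Definition theta (N : nat) : R := (\sum_(1 <= i < N.+1) ((N + i - 1)%:R)^-1)^-1.
Definition Qo (N : nat) (i : nat) : R := theta N / (N + i - 1)%:R.

Definition entropy (p : S -> R) : R := - \sum_(s : S) p s * lg (p s).
Definition relent (p q : S -> R) : R := \sum_(s : S) p s * lg (p s / q s).

End Defs.

From HB Require Import structures.
From mathcomp Require Import all_boot all_order all_algebra.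
From mathcomp Require Import all_classical all_reals all_analysis.
From mathcomp Require Import ring lra zify.
Import Order.TTheory GRing.Theory Num.Theory.
Local Open Scope ring_scope.

(* Write H(N, M) = 1/N + 1/(N+1) + ... + 1/(N+M-1) ([hsum N M] below), so that
   theta = 1/H(N, N).
   Summing 1/(j+1) <= ln((j+1)/j) < 1/j over j = N, ..., N+M-1 gives
   ln((N+M)/N) <= H(N, M) <= ln((N+M)/N) + 1/N - 1/(N+M); in particular
   ln 2 < H(N, N) <= ln 2 + 1/(2N).

   For the first claim put m = N + i - 1 >= N: then Q^o(i) = theta/m < 1/(m ln 2),
   and ln u >= 2(u-1)/(u+1) at u = (m+1)/m gives 1/m <= ln((m+1)/m) + 1/(2m^2).

   For the second, fix s, put k = kappa_s and M = 2^k N_s - N, so 0 <= M < N.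
   As Q^o sums to 1, the expected length of s is k - H(N, M)/H(N, N), while
   lg(N/N_s) = k - ln((N+M)/N)/ln 2; the bounds on H make the difference smaller
   than lg e/(2N). Finally H(p) + D(p||q) = sum_s p(s) lg(N/N_s). *)

Section LnBounds.
Context {R : realType}.
Implicit Types x y k : R.

Lemma ln2_gt0 : 0 < ln (2 : R).
Proof. by rewrite ln_gt0 //; lra. Qed.

Lemma lt_ln1Dx x : -1 < x -> x != 0 -> ln (1 + x) < x.
Proof.
move=> x1 x0; rewrite -[ltRHS]expRK ltr_ln ?posrE ?expR_gt0 //; last lra.
exact: expR_gt1Dx.
Qed.

Lemma ln_ge_1subV y : 0 < y -> 1 - y^-1 <= ln y.
Proof.
move=> y0; have yV0 : 0 < y^-1 by rewrite invr_gt0.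
have := le_ln1Dx (_ : -1 < y^-1 - 1); rewrite addrCA subrr addr0 lnV ?posrE //.
by move=> /(_ ltac:(lra)); lra.
Qed.

Lemma ln_ge_ratio x : 1 <= x -> 2 * (x - 1) / (x + 1) <= ln x.
Proof.
move=> x1; pose h : R -> R := ((fun y => y + 1) * @ln R) - (fun y => 2 * (y - 1)).
have h'E y : 0 < y -> is_derive y 1 h (ln y + (y + 1) / y - 2).
  move=> y0; apply: is_derive_eq.
    by apply: is_deriveB; apply: is_deriveM; exact: is_derive1_ln.
  by rewrite /= -![_ *: _]/(_ * _); field; lra.
have h_ndecr : h 1 <= h x.
  apply: (@ger0_derive1_ndecr _ h 1 x) => //.
  - move=> y; rewrite in_itv /= => /andP[y1 _].
    by have [] := h'E y ltac:(lra).
  - move=> y; rewrite in_itv /= => /andP[y1 _].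
    rewrite derive1E; have [_ ->] := h'E y ltac:(lra).
    have := @ln_ge_1subV y ltac:(lra).
    have -> : (y + 1) / y = 1 + y^-1 by field; lra.
    lra.
  - apply: derivable_within_continuous => y; rewrite in_itv /= => /andP[y1 _].
    by have [] := h'E y ltac:(lra).
rewrite /h !fctE ln1 mulr0 !subrr mulr0 subr0 in h_ndecr.
rewrite ler_pdivrMr; lra.
Qed.

Lemma ln_succ_lt k : 0 < k -> ln ((k + 1) / k) < k^-1.
Proof.
move=> k0; have kV0 : 0 < k^-1 by rewrite invr_gt0.
rewrite (_ : (k + 1) / k = 1 + k^-1); last by field; lra.
by apply: lt_ln1Dx; rewrite ?gt_eqF //; lra.
Qed.

Lemma invS_le_ln_succ k : 0 < k -> (k + 1)^-1 <= ln ((k + 1) / k).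
Proof.
move=> k0; have := @ln_ge_1subV ((k + 1) / k) ltac:(rewrite divr_gt0 //; lra).
by rewrite (_ : 1 - ((k + 1) / k)^-1 = (k + 1)^-1) //; field; lra.
Qed.

Lemma inv_le_ln_succD k : 0 < k -> k^-1 <= ln ((k + 1) / k) + (2 * k ^+ 2)^-1.
Proof.
move=> k0.
have := @ln_ge_ratio ((k + 1) / k) ltac:(rewrite ler_pdivlMr; lra).
rewrite (_ : 2 * ((k + 1) / k - 1) / ((k + 1) / k + 1) = 2 / (2 * k + 1)).
  suff : k^-1 - 2 / (2 * k + 1) <= (2 * k ^+ 2)^-1 by lra.
  rewrite (_ : k^-1 - 2 / (2 * k + 1) = (k * (2 * k + 1))^-1); last by field; lra.
  by rewrite lef_pV2 ?posrE; nra.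
by field; lra.
Qed.
End LnBounds.

Section HarmonicBlock.
Variable R : realType.

Definition hsum (N M : nat) : R := \sum_(1 <= i < M.+1) ((N + i - 1)%:R)^-1.

Lemma hsum0 N : hsum N 0 = 0.
Proof. by rewrite /hsum big_geq. Qed.

Lemma hsumS N M : hsum N M.+1 = hsum N M + ((N + M)%:R)^-1.
Proof. by rewrite /hsum big_nat_recr //= addnS subn1. Qed.

Lemma ln_ratioS N M : (0 < N)%N ->
  ln ((N + M.+1)%:R / N%:R) =
  ln ((N + M)%:R / N%:R) + ln (((N + M)%:R + 1) / (N + M)%:R) :> R.
Proof.
move=> N0; have N0' : 0 < N%:R :> R by rewrite ltr0n.
have NM0 : 0 < (N + M)%:R :> R by rewrite ltr0n; lia.
rewrite -lnM ?posrE ?divr_gt0 ?addr_gt0 //.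
by rewrite addnS -addn1 natrD; congr ln; field; lra.
Qed.

Lemma ln_le_hsum N M : (0 < N)%N -> ln ((N + M)%:R / N%:R) <= hsum N M.
Proof.
move=> N0; have N0' : N%:R != 0 :> R by rewrite pnatr_eq0 -lt0n.
elim: M => [|M IH]; first by rewrite hsum0 addn0 divff // ln1.
have NM0 : 0 < (N + M)%:R :> R by rewrite ltr0n; lia.
by rewrite hsumS ln_ratioS //; have := ln_succ_lt _ NM0; lra.
Qed.

Lemma ln_lt_hsum N M : (0 < N)%N -> (0 < M)%N -> ln ((N + M)%:R / N%:R) < hsum N M.
Proof.
case: M => // M N0 _; have NM0 : 0 < (N + M)%:R :> R by rewrite ltr0n; lia.
rewrite hsumS ln_ratioS //.
by have := ln_le_hsum N M N0; have := ln_succ_lt _ NM0; lra.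
Qed.

Lemma hsum_le_ln N M : (0 < N)%N ->
  hsum N M <= ln ((N + M)%:R / N%:R) + (N%:R)^-1 - ((N + M)%:R)^-1.
Proof.
move=> N0; have N0' : N%:R != 0 :> R by rewrite pnatr_eq0 -lt0n.
elim: M => [|M IH]; first by rewrite hsum0 addn0 divff // ln1 add0r subrr.
have NM0 : 0 < (N + M)%:R :> R by rewrite ltr0n; lia.
rewrite hsumS ln_ratioS // addnS -natr1.
by have := invS_le_ln_succ _ NM0; lra.
Qed.

Lemma ln_ratio_itv N M : (0 < N)%N -> (M <= N)%N ->
  0 <= ln ((N + M)%:R / N%:R : R) <= ln 2.
Proof.
move=> N0 MN; have N0' : 0 < N%:R :> R by rewrite ltr0n.
rewrite ln_ge0 ?ler_pdivlMr ?mul1r ?ler_nat ?leq_addr //=.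
rewrite ler_ln ?posrE ?divr_gt0 ?ltr0n ?addn_gt0 ?N0 // ler_pdivrMr //.
by rewrite -natrM ler_nat; lia.
Qed.

Lemma ln2_lt_hsum N : (0 < N)%N -> ln 2 < hsum N N.
Proof.
move=> N0; have N0' : 0 < N%:R :> R by rewrite ltr0n.
by have := ln_lt_hsum N N N0 N0; rewrite natrD (_ : (_ + _) / _ = 2) //; field; lra.
Qed.

Lemma hsum_le_ln2 N : (0 < N)%N -> hsum N N <= ln 2 + (2 * N%:R)^-1.
Proof.
move=> N0; have N0' : 0 < N%:R :> R by rewrite ltr0n.
have := hsum_le_ln N N N0; rewrite natrD (_ : (_ + _) / _ = 2); last by field; lra.
have : N%:R^-1 - (N%:R + N%:R)^-1 = (2 * N%:R)^-1 :> R by field; lra.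
lra.
Qed.
End HarmonicBlock.

Section QoSums.
Variable R : realType.

Lemma thetaE N : theta R N = (hsum R N N)^-1.
Proof. by []. Qed.

Lemma sum_Qo_prefix N M : (M <= N)%N ->
  \sum_(1 <= i < N.+1) (if (i <= M)%N then Qo R N i else 0) = theta R N * hsum R N M.
Proof.
move=> MN; rewrite (@big_cat_nat _ _ _ M.+1) //= [X in _ + X]big_nat_cond.
rewrite [X in _ + X]big1 ?addr0.
  by rewrite /hsum mulr_sumr; apply: eq_big_nat => i /andP[_]; rewrite ltnS => ->.
by move=> i /andP[/andP[Mi _] _]; rewrite leqNgt Mi.
Qed.

Lemma sum_Qo N : (0 < N)%N -> \sum_(1 <= i < N.+1) Qo R N i = 1.
Proof.
move=> N0; have hN0 := lt_trans ln2_gt0 (ln2_lt_hsum R N N0).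
rewrite -[RHS](mulVf (lt0r_neq0 hN0)) -thetaE -sum_Qo_prefix //.
by apply: eq_big_nat => i /andP[_]; rewrite ltnS => ->.
Qed.

Lemma sum_Qo_len N M k : (0 < N)%N -> (M <= N)%N -> (0 < k)%N ->
  \sum_(1 <= i < N.+1) Qo R N i * (if (i <= M)%N then k.-1 else k)%:R =
  k%:R - theta R N * hsum R N M.
Proof.
move=> N0 MN k0; rewrite -sum_Qo_prefix // -[k%:R]mulr1 -[X in _ * X](sum_Qo _ N0).
rewrite mulr_sumr -sumrB; apply: eq_bigr => i _; case: ifP => _.
  by rewrite -subn1 natrB // mulrBr mulr1 mulrC.
by rewrite subr0 mulrC.
Qed.
End QoSums.

Section BinaryLog.
Context {R : realType}.

Lemma lg_expR1 : lg (expR 1) = (ln 2)^-1 :> R.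
Proof. by rewrite /lg expRK mul1r. Qed.

Lemma lg_pow2 k : lg (2 ^ k)%:R = k%:R :> R.
Proof. by rewrite /lg natrX lnXn // -[_ *+ k]mulr_natl mulfK ?gt_eqF ?ln2_gt0. Qed.

Lemma ler_lg : {in Num.pos &, {mono @lg R : x y / x <= y}}.
Proof. by move=> x y x0 y0; rewrite /lg ler_pM2r ?invr_gt0 ?ln2_gt0 // ler_ln. Qed.

Lemma ltr_lg : {in Num.pos &, {mono @lg R : x y / x < y}}.
Proof. by move=> x y x0 y0; rewrite /lg ltr_pM2r ?invr_gt0 ?ln2_gt0 // ltr_ln. Qed.

Lemma absz_ceil_bounds (y : R) : 0 < y ->
  [/\ (0 < `|Num.ceil y|)%N, `|Num.ceil y|%:R - 1 < y & y <= `|Num.ceil y|%:R].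
Proof.
move=> y0; have c0 : (0 < Num.ceil y)%R by rewrite ceil_gt0.
have kE : `|Num.ceil y|%:R = (Num.ceil y)%:~R :> R by rewrite natr_absz gtr0_norm.
have /andP[c1 c2] := ceil_itv y.
by rewrite absz_gt0 gt_eqF // kE; split => //; rewrite intrB in c1.
Qed.

Lemma kappa_bounds (S : finType) (Ns : S -> nat) (s : S) :
  (0 < Ns s)%N -> (Ns s < Ntot Ns)%N ->
  [/\ (0 < kappa R Ns s)%N, (Ntot Ns <= 2 ^ kappa R Ns s * Ns s)%N
    & (2 ^ kappa R Ns s * Ns s < 2 * Ntot Ns)%N].
Proof.
rewrite /kappa; set N := Ntot Ns; set n := Ns s => n0 nN.
have Nn0 : 0 < N%:R / n%:R :> R by rewrite divr_gt0 ?ltr0n //; lia.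
have pow0 j : 0 < (2 ^ j)%:R :> R by rewrite ltr0n expn_gt0.
have lg0 : 0 < lg (N%:R / n%:R : R).
  by rewrite /lg divr_gt0 ?ln2_gt0 // ln_gt0 // ltr_pdivlMr ?ltr0n // mul1r ltr_nat.
have [k0 c1 c2] := absz_ceil_bounds _ lg0; set k := `|_|%N in k0 c1 c2 *.
split => //.
  move: c2; rewrite -[k%:R]lg_pow2 ler_lg ?posrE // ler_pdivrMr ?ltr0n //.
  by rewrite -natrM ler_nat.
move: c1; rewrite -(prednK k0) -natr1 addrK -[k.-1%:R]lg_pow2 ltr_lg ?posrE //.
by rewrite ltr_pdivlMr ?ltr0n // -natrM ltr_nat expnS -mulnA ltn_pmul2l.
Qed.
End BinaryLog.

Section CodeLength.
Variable R : realType.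

Lemma div_lt_div_add {L a b t d : R} : 0 < L -> L < a -> a <= L + d ->
  0 <= t <= L -> t <= b -> t / L < b / a + d / L.
Proof.
move=> L0 La ad /andP[t0 tL] tb; have a0 : 0 < a by lra.
rewrite -(ltr_pM2r (mulr_gt0 L0 a0)) mulrDl.
have -> : t / L * (L * a) = t * a by field; lra.
have -> : b / a * (L * a) = b * L by field; lra.
have -> : d / L * (L * a) = d * a by field; lra.
nra.
Qed.

Lemma code_len_lt_pow2 (N n k : nat) :
  (0 < n)%N -> (0 < k)%N -> (N <= 2 ^ k * n < 2 * N)%N ->
  \sum_(1 <= i < N.+1) Qo R N i * (if (i <= 2 ^ k * n - N)%N then k.-1 else k)%:R <
  lg (N%:R / n%:R : R) + lg (expR 1) / (2 * N%:R).
Proof.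
move=> n0 k0 /andP[Nle ltN2]; set M := (2 ^ k * n - N)%N.
have N0 : (0 < N)%N by lia.
have MN : (M <= N)%N by lia.
have lgE : lg (N%:R / n%:R : R) = k%:R - ln ((N + M)%:R / N%:R : R) / ln 2.
  have NM0 : 0 < (N + M)%:R / N%:R :> R by rewrite divr_gt0 ?ltr0n ?addn_gt0 ?N0.
  have pow0 : 0 < (2 ^ k)%:R :> R by rewrite ltr0n expn_gt0.
  rewrite -[k%:R]lg_pow2 /lg -mulrBl -ln_div ?posrE //.
  rewrite (_ : (N + M)%N = 2 ^ k * n)%N; last by lia.
  by congr (ln _ / _); rewrite natrM; field; rewrite !pnatr_eq0 -!lt0n n0 N0 expn_gt0.
have := div_lt_div_add ln2_gt0 (ln2_lt_hsum R N N0) (hsum_le_ln2 R N N0)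
  (ln_ratio_itv R N M N0 MN) (ln_le_hsum R N M N0).
rewrite sum_Qo_len // thetaE lgE lg_expR1 mulrC [(ln 2)^-1 / _]mulrC; lra.
Qed.

Lemma code_len_lt (S : finType) (Ns : S -> nat) (s : S) :
  (0 < Ns s)%N -> (Ns s < Ntot Ns)%N ->
  \sum_(1 <= i < (Ntot Ns).+1) Qo R (Ntot Ns) i * (ell R Ns s i)%:R <
  lg ((Ntot Ns)%:R / (Ns s)%:R : R) + lg (expR 1) / (2 * (Ntot Ns)%:R).
Proof.
move=> n0 nN; have [k0 Nle ltN2] := @kappa_bounds R _ _ _ n0 nN.
by apply: code_len_lt_pow2; rewrite ?Nle.
Qed.
End CodeLength.

Lemma Qo_lt_Qstar (R : realType) (N i : nat) : (0 < N)%N -> (1 <= i <= N)%N ->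
  Qo R N i < Qstar R N i + lg (expR 1) / (2 * N%:R ^+ 2).
Proof.
move=> N0 /andP[i1 iN]; rewrite /Qo /Qstar lg_expR1 {1}/lg.
have -> : (N + i)%:R = (N + i - 1)%:R + 1 :> R by rewrite natr1; congr _%:R; lia.
set m : R := (N + i - 1)%:R; have Nm : N%:R <= m by rewrite ler_nat; lia.
have N0' : 0 < N%:R :> R by rewrite ltr0n.
have m0 : 0 < m by lra.
have hN0 := ln2_lt_hsum R N N0.
have theta_lt : theta R N < (ln 2)^-1.
  by rewrite thetaE ltf_pV2 ?posrE ?ln2_gt0 // (lt_trans ln2_gt0 hN0).
have m_sq : (2 * m ^+ 2)^-1 <= (2 * N%:R ^+ 2)^-1 by rewrite lef_pV2 ?posrE; nra.
have := inv_le_ln_succD _ m0; set l := ln _ => hm.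
apply: (@lt_le_trans _ _ ((ln 2)^-1 * m^-1)); first by rewrite ltr_pM2r ?invr_gt0.
have -> : l / ln 2 + (ln 2)^-1 / (2 * N%:R ^+ 2) = (ln 2)^-1 * (l + (2 * N%:R ^+ 2)^-1).
  by ring.
by rewrite ler_pM2l ?invr_gt0 ?ln2_gt0 //; lra.
Qed.

Lemma Ns_lt_Ntot (S : finType) (Ns : S -> nat) (s : S) :
  (2 <= #|S|)%N -> (forall t, 0 < Ns t)%N -> (Ns s < Ntot Ns)%N.
Proof.
move=> S2 Ns0; rewrite /Ntot (bigD1 s) //= -[ltnLHS]addn0 ltn_add2l.
apply: (@leq_trans (\sum_(t | t != s) 1)%N); first by rewrite sum1_card cardC1; lia.
by apply: leq_sum => t _; exact: Ns0.
Qed.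

Lemma entropy_add_relent (R : realType) (S : finType) (p : S -> R) (Ns : S -> nat) :
  (forall s, 0 < p s) -> (forall s, 0 < Ns s <= Ntot Ns)%N ->
  entropy p + relent p (qdist R Ns) = \sum_s p s * lg ((Ntot Ns)%:R / (Ns s)%:R).
Proof.
move=> p0 Ns0; rewrite /entropy /relent -sumrN -big_split; apply: eq_bigr => s _ /=.
have /andP[n0 nN] := Ns0 s; have N0 : (0 < Ntot Ns)%N by lia.
by rewrite /lg /qdist !ln_div ?posrE ?divr_gt0 ?ltr0n //; ring.
Qed.

Theorem lemma3 (R : realType) (S : finType) (p : S -> R) (Ns : S -> nat)
  (hS : (2 <= #|S|)%N)
  (hp : forall s, 0 < p s)
  (hp1 : \sum_(s : S) p s = 1)
  (hNs : forall s, (0 < Ns s)%N)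
  (hN : (2 <= Ntot Ns)%N) :
  (forall i : nat, (1 <= i <= Ntot Ns)%N ->
     Qo R (Ntot Ns) i < Qstar R (Ntot Ns) i
                        + lg (expR 1) / (2 * (Ntot Ns)%:R ^+ 2)) /\
  avg_len p Ns (Qo R (Ntot Ns)) <
    entropy p + relent p (qdist R Ns) + lg (expR 1) / (2 * (Ntot Ns)%:R).
Proof.
have Ns_lt s := @Ns_lt_Ntot S Ns s hS hNs.
split; first by move=> i; apply: Qo_lt_Qstar; lia.
rewrite entropy_add_relent // => [|s]; last by rewrite hNs ltnW.
set c := lg (expR 1) / _; have -> : c = \sum_s p s * c by rewrite -mulr_suml hp1 mul1r.
rewrite -big_split /avg_len.
have /card_gt0P[s0 _] : (0 < #|S|)%N by lia.
apply: ltr_sum => [|s _]; first by apply/hasP; exists s0.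
by rewrite /= -mulrDr ltr_pM2l //; apply: code_len_lt.
Qed.
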